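(* Let $b\in\mathbb N$, $b\ge 2$. Then there exists $m\in\mathbb N$ such that $m$ is antipalindromic in base $b$ and also antipalindromic in at least one other integer base $c\ge 2$ with $c\neq b$ and $c<m$.
   Context: For an integer $b\ge 2$, every natural number $x$ has a unique base-$b$ expansion $x=a_\ell b^\ell+\dots+a_1b+a_0$ with $a_0,\dots,a_\ell\in\{0,1,\dots,b-1\}$ and $a_\ell\neq 0$. The number $x$ is antipalindromic in base $b$ if $a_j=b-1-a_{\ell-j}$ for all $j\in\{0,1,\dots,\ell\}$. *)

From mathcomp Require Import all_boot.
Set Implicit Arguments. Unset Strict Implicit. Unset Printing Implicit Defensive.

(* Base-b digits of x, least significant first: digits b x = [:: a_0; ...; a_l]
   with a_l <> 0 (for x > 0, b >= 2); digits b 0 = [::]. *)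
Fixpoint digits_aux (fuel b x : nat) : seq nat :=
  match fuel with
  | 0 => [::]
  | f.+1 => if x == 0 then [::] else (x %% b) :: digits_aux f b (x %/ b)
  end.

Definition digits (b x : nat) : seq nat := digits_aux x b x.

(* x is antipalindromic in base b: with l + 1 = number of digits,
   a_j = b - 1 - a_{l-j} for all j in {0,...,l}. Natural numbers x >= 1
   (the expansion requires a nonzero leading digit). *)
Definition antipalindromic (b x : nat) : Prop :=
  0 < x /\
  let s := digits b x in
  let l := (size s).-1 in
  forall j, j <= l -> nth 0 s j = b - 1 - nth 0 s (l - j).

From mathcomp Require Import all_boot.
From mathcomp Require Import zify.

(* The numbers k * (c - 1) with 2 <= k <= c are two-digit antipalindromes in
   base c, with digits k - 1 and c - k.  Hence b * (b - 1) is antipalindromic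
   both in base b (k = b) and in base b + 1 (k = b - 1) as soon as b >= 3;
   for b = 2 take 10 = 1010_2 = 14_6. *)

Lemma digits_two c a0 a1 : a0 < c -> 0 < a1 < c ->
  digits c (a1 * c + a0) = [:: a0; a1].
Proof.
move=> a0_lt /andP[a1_gt0 a1_lt].
rewrite /digits; set x := a1 * c + a0.
have x_mod : x %% c = a0 by rewrite modnMDl modn_small.
have x_div : x %/ c = a1 by rewrite divnMDl ?divn_small ?addn0 //; lia.
have [n x_eq] : exists n, x = n.+2 by exists (x - 2); rewrite /x; nia.
rewrite {1}x_eq /= x_mod x_div.
have -> : (x == 0) = false by rewrite x_eq.
have -> : (a1 == 0) = false by apply/eqP; lia.
by rewrite modn_small // divn_small //; case: n {x_eq}.
Qed.

Lemma antipalindromic_mul_pred c k : 2 <= k <= c ->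
  antipalindromic c (k * (c - 1)).
Proof.
move=> k_range; split; first by nia.
have -> : k * (c - 1) = (k - 1) * c + (c - k) by nia.
rewrite digits_two /=; [| lia | lia].
by case=> [|[|]] //= _; lia.
Qed.

Theorem mainTheorem15 (b : nat) (hb : 2 <= b) :
  exists m : nat, antipalindromic b m /\
    exists c : nat, [/\ 2 <= c, c != b, c < m & antipalindromic c m].
Proof.
have [b_ge3 | b_le2] := ltnP 2 b.
- exists (b * (b - 1)); split; first by apply: antipalindromic_mul_pred; lia.
  exists b.+1; split; [lia | by rewrite gtn_eqF | nia |].
  have -> : b * (b - 1) = (b - 1) * (b.+1 - 1) by lia.
  by apply: antipalindromic_mul_pred; lia.
- have -> : b = 2 by lia.
  exists 10; split.
    by split=> //= -[|[|[|[|]]]].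
  exists 6; split=> //.
  exact: (@antipalindromic_mul_pred 6 2).
Qed.
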